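(* There exist constants $\varepsilon_0>0$ and $C_1>0$ such that the following holds. Let $r>0$, $\delta>0$, $R:=r/\delta$, $\varepsilon:=R+\tfrac12-\lfloor R+\tfrac12\rfloor$. If $\varepsilon\in[0,\varepsilon_0]$ and $R$ is sufficiently large, then $$\int_{-\pi}^{\pi}\Delta_\delta(r\cos\theta)\cos\theta\,d\theta\ \ge\ C_1\,\frac{\delta^{3/2}}{\sqrt r}.$$
   Context: For $\delta>0$, $Q_\delta(t):=\delta\lfloor t/\delta+1/2\rfloor$ and $\Delta_\delta(t):=t-Q_\delta(t)$. *)

From Stdlib Require Import Reals Lra.
Open Scope R_scope.

(* floor via Stdlib's Int_part (Int_part x = up x - 1 = floor x) *)
Definition floorR (x : R) : R := IZR (Int_part x).

Definition Qd (delta t : R) : R := delta * floorR (t / delta + 1/2).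

Definition Dd (delta t : R) : R := t - Qd delta t.

Definition integrand (r delta : R) (theta : R) : R :=
  Dd delta (r * cos theta) * cos theta.

From Stdlib Require Import Reals Lra Lia Psatz ZArith.
From Coquelicot Require Import Coquelicot.
Open Scope R_scope.

(* Write floor(y + 1/2) as the number of half-integer levels k + 1/2 in (0, y] minus the number
   in [y, 0).  A level K <= R contributes
   int_{-pi}^{pi} (1{R cos t >= K} - 1{R cos t < -K}) cos t dt = 4 sqrt(1 - (K/R)^2),
   so the integral equals 4 delta / R times the gap between the area pi R^2 / 4 of a quarter disc
   of radius R and the midpoint sum of g(x) = sqrt(R^2 - x^2) over the cells [k, k + 1], k < N,
   where N = floor(R + 1/2).  By concavity of g the cells below N - 1 overshoot the area by at
   most (g'(0) - g'(N - 1)) / 8, about sqrt R / 8.  When eps is small the last midpoint N - 1/2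
   is within eps of R, so the last cell contributes only O(sqrt (eps R)), whereas the area under
   the semicircle between N - 1 and R - 1/6 is at least sqrt (R/3) / 3, about 0.19 sqrt R. *)

Lemma increment_le_of_derive_le (F G f g : R -> R) (u v : R) :
  u <= v ->
  (forall x, u <= x <= v -> is_derive F x (f x)) ->
  (forall x, u <= x <= v -> is_derive G x (g x)) ->
  (forall x, u <= x <= v -> g x <= f x) ->
  G v - G u <= F v - F u.
Proof.
  intros Huv HF HG Hgf.
  destruct (Req_dec u v) as [<- | Hne]; [lra |].
  destruct (MVT_cor2 (fun x => F x - G x) (fun x => f x - g x) u v) as [c [Hc Hcuv]].
  - lra.
  - intros x Hx. apply is_derive_Reals. exact (is_derive_minus F G x _ _ (HF x Hx) (HG x Hx)).
  - assert (Hfg := Hgf c ltac:(lra)). nra.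
Qed.

Section ConcaveMidpointRule.

Variables (F f df : R -> R) (a b : R).
Hypothesis F_deriv : forall x, a <= x <= b -> is_derive F x (f x).
Hypothesis f_deriv : forall x, a <= x <= b -> is_derive f x (df x).
Hypothesis df_antitone : forall x y, a <= x -> x <= y -> y <= b -> df y <= df x.

Lemma tangent_right_le m x : a <= m -> m <= x -> x <= b -> f m + df b * (x - m) <= f x.
Proof.
  intros Ham Hmx Hxb.
  enough (df b * x - df b * m <= f x - f m) by lra.
  apply (increment_le_of_derive_le f (fun t => df b * t) df (fun _ => df b)); [lra | | |].
  - intros t Ht. apply f_deriv. lra.
  - intros t Ht. auto_derive; [exact I | ring].
  - intros t Ht. apply df_antitone; lra.
Qed.

Lemma tangent_left_le m x : a <= x -> x <= m -> m <= b -> f m + df a * (x - m) <= f x.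
Proof.
  intros Hax Hxm Hmb.
  enough (f m - f x <= df a * m - df a * x) by lra.
  apply (increment_le_of_derive_le (fun t => df a * t) f (fun _ => df a) df); [lra | | |].
  - intros t Ht. auto_derive; [exact I | ring].
  - intros t Ht. apply f_deriv. lra.
  - intros t Ht. apply df_antitone; lra.
Qed.

(* Integrate the two tangent-line bounds on either half of [a, b]. *)
Lemma midpoint_rule_concave :
  a <= b ->
  (b - a) * f ((a + b) / 2) + (b - a) ^ 2 / 8 * (df b - df a) <= F b - F a.
Proof.
  intros Hab. set (m := (a + b) / 2).
  assert (Hright : f m * b + df b * (b - m) ^ 2 / 2 - (f m * m + df b * (m - m) ^ 2 / 2)
                   <= F b - F m).
  { apply (increment_le_of_derive_le F (fun t => f m * t + df b * (t - m) ^ 2 / 2)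
             f (fun t => f m + df b * (t - m))); [unfold m; lra | | |].
    - intros t Ht. apply F_deriv. unfold m in *. lra.
    - intros t Ht. auto_derive; [exact I | field].
    - intros t Ht. apply tangent_right_le; unfold m in *; lra. }
  assert (Hleft : f m * m + df a * (m - m) ^ 2 / 2 - (f m * a + df a * (a - m) ^ 2 / 2)
                  <= F m - F a).
  { apply (increment_le_of_derive_le F (fun t => f m * t + df a * (t - m) ^ 2 / 2)
             f (fun t => f m + df a * (t - m))); [unfold m; lra | | |].
    - intros t Ht. apply F_deriv. unfold m in *. lra.
    - intros t Ht. auto_derive; [exact I | field].
    - intros t Ht. apply tangent_left_le; unfold m in *; lra. }
  assert (E : (b - a) * f m + (b - a) ^ 2 / 8 * (df b - df a)
              = (f m * b + df b * (b - m) ^ 2 / 2 - (f m * m + df b * (m - m) ^ 2 / 2))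
                + (f m * m + df a * (m - m) ^ 2 / 2 - (f m * a + df a * (a - m) ^ 2 / 2)))
    by (unfold m; field).
  lra.
Qed.

End ConcaveMidpointRule.

Fixpoint sum_lt (f : nat -> R) (n : nat) : R :=
  match n with O => 0 | S m => sum_lt f m + f m end.

Lemma sum_lt_ext (f g : nat -> R) n :
  (forall k, (k < n)%nat -> f k = g k) -> sum_lt f n = sum_lt g n.
Proof.
  induction n as [| n IH]; intros Hfg; simpl; [reflexivity |].
  rewrite IH, Hfg; [reflexivity | lia | intros k Hk; apply Hfg; lia].
Qed.

Lemma sum_lt_scal_l (c : R) (f : nat -> R) n : sum_lt (fun k => c * f k) n = c * sum_lt f n.
Proof. induction n as [| n IH]; simpl; [ring | rewrite IH; ring]. Qed.

Lemma sum_lt_mult_r (c : R) (f : nat -> R) n : sum_lt (fun k => f k * c) n = sum_lt f n * c.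
Proof. induction n as [| n IH]; simpl; [ring | rewrite IH; ring]. Qed.

Lemma is_derive_asin u : -1 < u < 1 -> is_derive asin u (1 / sqrt (1 - u²)).
Proof.
  intros Hu. apply is_derive_Reals.
  apply (derive_pt_eq_1 _ _ _ (derivable_pt_asin u Hu)). apply derive_pt_asin.
Qed.

Definition semicircle (Rr x : R) : R := sqrt (Rr * Rr - x * x).

Section Semicircle.

Variable Rr : R.
Hypothesis Rr_pos : 0 < Rr.

Definition semicircle_area (x : R) : R :=
  (x * semicircle Rr x + Rr * Rr * asin (x / Rr)) / 2.

Definition semicircle_slope (x : R) : R := - x / semicircle Rr x.

Lemma semicircle_sq x : -Rr <= x <= Rr -> semicircle Rr x * semicircle Rr x = Rr * Rr - x * x.
Proof. intros Hx. apply sqrt_sqrt. nra. Qed.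

Lemma semicircle_pos x : -Rr < x < Rr -> 0 < semicircle Rr x.
Proof. intros Hx. apply sqrt_lt_R0. nra. Qed.

Lemma semicircle_antitone x y : 0 <= x -> x <= y -> semicircle Rr y <= semicircle Rr x.
Proof. intros Hx Hxy. apply sqrt_le_1_alt. nra. Qed.

Lemma semicircle_eq_scaled x : Rr * sqrt (1 - (x / Rr)²) = semicircle Rr x.
Proof.
  unfold semicircle.
  replace (Rr * Rr - x * x) with (Rr * Rr * (1 - (x / Rr)²)) by (unfold Rsqr; field; lra).
  rewrite sqrt_mult_alt, sqrt_square; lra || nra.
Qed.

Lemma is_derive_semicircle x : -Rr < x < Rr -> is_derive (semicircle Rr) x (semicircle_slope x).
Proof.
  intros Hx. unfold semicircle_slope, semicircle.
  auto_derive; [nra |].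
  replace (Rr * Rr + - (x * x)) with (Rr * Rr - x * x) by ring.
  field. apply Rgt_not_eq, (semicircle_pos x Hx).
Qed.

Lemma is_derive_semicircle_area x : -Rr < x < Rr -> is_derive semicircle_area x (semicircle Rr x).
Proof.
  intros Hx.
  assert (Hu : -1 < x / Rr < 1).
  { split; apply Rmult_lt_reg_r with Rr; auto; unfold Rdiv; rewrite Rmult_assoc, Rinv_l; lra. }
  assert (Hg := semicircle_pos x Hx).
  unfold semicircle_area, semicircle.
  auto_derive.
  - split; [nra |]. split; [| exact I]. eexists. apply (is_derive_asin _ Hu).
  - replace (Derive (fun y => asin y) (x * / Rr)) with (1 / sqrt (1 - (x / Rr)²))
      by (symmetry; apply is_derive_unique, (is_derive_asin _ Hu)).
    replace (Rr * Rr + - (x * x)) with (Rr * Rr - x * x) by ring. fold (semicircle Rr x).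
    replace (sqrt (1 - (x / Rr)²)) with (semicircle Rr x / Rr)
      by (rewrite <- (semicircle_eq_scaled x); field; lra).
    assert (Hsq := semicircle_sq x ltac:(lra)).
    transitivity ((semicircle Rr x * semicircle Rr x + Rr * Rr - x * x) / (2 * semicircle Rr x));
      [field; lra |].
    replace (semicircle Rr x * semicircle Rr x + Rr * Rr - x * x)
      with (2 * (semicircle Rr x * semicircle Rr x)) by (rewrite Hsq; ring).
    field. lra.
Qed.

Lemma semicircle_slope_antitone x y :
  0 <= x -> x <= y -> y < Rr -> semicircle_slope y <= semicircle_slope x.
Proof.
  intros Hx Hxy Hy. unfold semicircle_slope.
  assert (Hgx := semicircle_pos x ltac:(lra)). assert (Hgy := semicircle_pos y ltac:(lra)).
  assert (Hg := semicircle_antitone x y Hx Hxy).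
  replace (- y / semicircle Rr y) with (- (y * semicircle Rr x) / (semicircle Rr x * semicircle Rr y))
    by (field; lra).
  replace (- x / semicircle Rr x) with (- (x * semicircle Rr y) / (semicircle Rr x * semicircle Rr y))
    by (field; lra).
  unfold Rdiv. apply Rmult_le_compat_r; [left; apply Rinv_0_lt_compat; nra | nra].
Qed.

Lemma semicircle_area_0 : semicircle_area 0 = 0.
Proof. unfold semicircle_area. rewrite Rdiv_0_l, asin_0. field. Qed.

(* With x = Rr sin psi the area is Rr^2 (sin psi cos psi + psi) / 2, and cos psi <= PI/2 - psi. *)
Lemma semicircle_area_le x : 0 <= x <= Rr -> semicircle_area x <= PI * Rr * Rr / 4.
Proof.
  intros Hx.
  assert (Hu : 0 <= x / Rr <= 1).
  { split; [apply Rdiv_le_0_compat; lra |].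
    apply Rmult_le_reg_r with Rr; auto. unfold Rdiv. rewrite Rmult_assoc, Rinv_l; lra. }
  set (psi := asin (x / Rr)).
  assert (Hsin : sin psi = x / Rr) by (apply sin_asin; lra).
  assert (Hcos : Rr * cos psi = semicircle Rr x)
    by (unfold psi; rewrite cos_asin by lra; apply semicircle_eq_scaled).
  assert (Hpsi : 0 <= psi <= PI / 2).
  { destruct (asin_bound (x / Rr)) as [Hlo Hhi]. fold psi in Hlo, Hhi. split; [| lra].
    apply sin_incr_0; try lra. rewrite sin_0. lra. }
  assert (Hcos_pos : 0 <= cos psi) by (apply cos_ge_0; lra).
  assert (Hcos_le : cos psi <= PI / 2 - psi).
  { rewrite <- sin_shift.
    destruct (Req_dec psi (PI / 2)) as [-> | Hne].
    - rewrite Rminus_diag, sin_0. lra.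
    - left. apply sin_lt_x. lra. }
  assert (Hsin_le : sin psi <= 1) by apply SIN_bound.
  unfold semicircle_area. fold psi. rewrite <- Hcos.
  replace x with (Rr * sin psi) by (rewrite Hsin; field; lra).
  assert (sin psi * cos psi + psi <= PI / 2) by nra.
  nra.
Qed.

Lemma midpoint_sum_le_semicircle_area n :
  INR n < Rr ->
  sum_lt (fun k => semicircle Rr (INR k + 1/2)) n + semicircle_slope (INR n) / 8
  <= semicircle_area (INR n).
Proof.
  induction n as [| n IH]; intros Hn.
  - simpl. rewrite semicircle_area_0. unfold semicircle_slope. rewrite Ropp_0, Rdiv_0_l. lra.
  - rewrite S_INR in *. simpl sum_lt.
    assert (H0n := pos_INR n).
    assert (Hcell := midpoint_rule_concave semicircle_area (semicircle Rr) semicircle_slope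
                       (INR n) (INR n + 1)).
    replace (INR n + 1 - INR n) with 1 in Hcell by ring.
    replace ((INR n + (INR n + 1)) / 2) with (INR n + 1/2) in Hcell by field.
    assert (IH' := IH ltac:(lra)).
    enough (1 * semicircle Rr (INR n + 1/2) + 1 ^ 2 / 8 * (semicircle_slope (INR n + 1)
              - semicircle_slope (INR n)) <= semicircle_area (INR n + 1) - semicircle_area (INR n))
      by lra.
    apply Hcell; [| | | lra].
    + intros x Hx. apply is_derive_semicircle_area. lra.
    + intros x Hx. apply is_derive_semicircle. lra.
    + intros x y Hx Hxy Hy. apply semicircle_slope_antitone; lra.
Qed.

Lemma quarter_disc_minus_midpoint_sum_ge n y :
  INR n <= y < Rr ->
  semicircle_slope (INR n) / 8 + semicircle Rr y * (y - INR n) - semicircle Rr (INR n + 1/2)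
  <= PI * Rr * Rr / 4 - sum_lt (fun k => semicircle Rr (INR k + 1/2)) (S n).
Proof.
  intros Hy. simpl sum_lt.
  assert (Hn := pos_INR n).
  assert (Hcells := midpoint_sum_le_semicircle_area n ltac:(lra)).
  assert (Hstrip : semicircle Rr y * y - semicircle Rr y * INR n
                   <= semicircle_area y - semicircle_area (INR n)).
  { apply (increment_le_of_derive_le semicircle_area (fun t => semicircle Rr y * t)
             (semicircle Rr) (fun _ => semicircle Rr y)); [lra | | |].
    - intros t Ht. apply is_derive_semicircle_area. lra.
    - intros t Ht. auto_derive; [exact I | ring].
    - intros t Ht. apply semicircle_antitone; lra. }
  assert (Hquarter := semicircle_area_le y ltac:(lra)).
  lra.
Qed.

(* With s = sqrt Rr: the strip gains at least 0.19 s, the cells lose at most 0.127 s and the last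
   midpoint value is at most 0.045 s. *)
Lemma quarter_disc_minus_midpoint_sum N :
  100 <= Rr -> INR N <= Rr + 1/2 -> Rr + 1/2 - INR N <= 1/1000 ->
  sqrt Rr / 100 <= PI * Rr * Rr / 4 - sum_lt (fun k => semicircle Rr (INR k + 1/2)) N.
Proof.
  intros HR HN1 HN2.
  destruct N as [| n]; [simpl in HN2; lra |].
  rewrite S_INR in HN1, HN2.
  set (y := Rr - 1/6).
  eapply Rle_trans; [| apply (quarter_disc_minus_midpoint_sum_ge n y); unfold y; lra].
  set (x := INR n) in *. set (s := sqrt Rr).
  assert (Hs : s * s = Rr) by (apply sqrt_sqrt; lra).
  assert (Hs0 : 0 <= s) by apply sqrt_pos.
  assert (Hgy : 57/100 * s <= semicircle Rr y).
  { apply Rsqr_incr_0_var; [| apply sqrt_pos].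
    unfold Rsqr. rewrite semicircle_sq by (unfold y; lra).
    replace (57/100 * s * (57/100 * s)) with (3249/10000 * Rr) by (rewrite <- Hs; field).
    unfold y. nra. }
  assert (Hgm : semicircle Rr (x + 1/2) <= 448/10000 * s).
  { apply Rsqr_incr_0_var; [| lra].
    unfold Rsqr. rewrite semicircle_sq by lra.
    replace (448/10000 * s * (448/10000 * s)) with (200704/100000000 * Rr) by (rewrite <- Hs; field).
    nra. }
  assert (Hslope : - (101/100) * s <= semicircle_slope x).
  { assert (Hg := semicircle_pos x ltac:(lra)).
    assert (Hx : x <= 101/100 * s * semicircle Rr x).
    { apply Rsqr_incr_0_var; [| nra].
      unfold Rsqr.
      replace (101/100 * s * semicircle Rr x * (101/100 * s * semicircle Rr x))
        with (10201/10000 * Rr * (Rr * Rr - x * x))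
        by (rewrite <- semicircle_sq, <- Hs by lra; field).
      assert (Hx0 : 0 <= x) by apply pos_INR.
      assert (Rr - 2505/10000 <= Rr * Rr - x * x) by nra.
      nra. }
    unfold semicircle_slope.
    apply Rmult_le_reg_r with (semicircle Rr x); [lra |].
    replace (- x / semicircle Rr x * semicircle Rr x) with (- x) by (field; lra).
    lra. }
  assert (Hstrip : 57/100 * s * (1/3) <= semicircle Rr y * (y - x))
    by (apply Rmult_le_compat; unfold y in *; nra).
  lra.
Qed.

End Semicircle.

Definition crossing (K y : R) : R :=
  (if Rle_dec K y then 1 else 0) - (if Rlt_dec y (- K) then 1 else 0).

Lemma crossing_scale (Rr K y : R) : 0 < Rr -> crossing (Rr * K) (Rr * y) = crossing K y.
Proof.
  intros HR. unfold crossing.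
  destruct (Rle_dec (Rr * K) (Rr * y)), (Rle_dec K y), (Rlt_dec (Rr * y) (- (Rr * K))),
    (Rlt_dec y (- K)); nra.
Qed.

Lemma Z_le_Int_part (m : Z) (x : R) : (m <= Int_part x)%Z <-> IZR m <= x.
Proof.
  destruct (base_Int_part x) as [Hlo Hhi]. split; intros Hm.
  - apply IZR_le in Hm. lra.
  - enough (m < Int_part x + 1)%Z by lia.
    apply lt_IZR. rewrite plus_IZR. lra.
Qed.

Definition indicator_lt (k : nat) (n : Z) : R := if Z_lt_dec (Z.of_nat k) n then 1 else 0.

Lemma crossing_half_integer k y :
  crossing (INR k + 1/2) y
  = indicator_lt k (Int_part (y + 1/2)) - indicator_lt k (- Int_part (y + 1/2)).
Proof.
  unfold crossing, indicator_lt. rewrite INR_IZR_INZ.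
  set (n := Int_part (y + 1/2)).
  assert (Hup : IZR (Z.of_nat k) + 1/2 <= y <-> (Z.of_nat k < n)%Z).
  { unfold n. rewrite <- Z.le_succ_l, <- Z.add_1_r, Z_le_Int_part, plus_IZR. lra. }
  assert (Hdown : y < - (IZR (Z.of_nat k) + 1/2) <-> (Z.of_nat k < - n)%Z).
  { assert (H := Z_le_Int_part (- Z.of_nat k) (y + 1/2)). rewrite opp_IZR in H. fold n in H.
    split; intros Hk.
    - enough (~ (- Z.of_nat k <= n)%Z) by lia. rewrite H. lra.
    - enough (~ (- Z.of_nat k <= n)%Z) by (rewrite H in *; lra). lia. }
  f_equal.
  - destruct (Rle_dec _ y), (Z_lt_dec _ n); first [reflexivity | exfalso; tauto].
  - destruct (Rlt_dec y _), (Z_lt_dec _ (- n)); first [reflexivity | exfalso; tauto].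
Qed.

Lemma sum_lt_indicator_lt (n : Z) M :
  sum_lt (fun k => indicator_lt k n) M = IZR (Z.min (Z.of_nat M) (Z.max n 0)).
Proof.
  induction M as [| M IH]; simpl sum_lt.
  { replace (Z.min (Z.of_nat 0) (Z.max n 0)) with 0%Z by lia. reflexivity. }
  rewrite IH, Nat2Z.inj_succ. unfold indicator_lt.
  destruct (Z_lt_dec (Z.of_nat M) n).
  - replace (Z.min (Z.succ (Z.of_nat M)) (Z.max n 0)) with (Z.min (Z.of_nat M) (Z.max n 0) + 1)%Z
      by lia.
    rewrite plus_IZR. ring.
  - replace (Z.min (Z.succ (Z.of_nat M)) (Z.max n 0)) with (Z.min (Z.of_nat M) (Z.max n 0))
      by lia.
    ring.
Qed.

Lemma floorR_half_eq_sum_crossing y M :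
  (- Z.of_nat M <= Int_part (y + 1/2) <= Z.of_nat M)%Z ->
  floorR (y + 1/2) = sum_lt (fun k => crossing (INR k + 1/2) y) M.
Proof.
  intros HM.
  transitivity (sum_lt (fun k => indicator_lt k (Int_part (y + 1/2))) M
                - sum_lt (fun k => indicator_lt k (- Int_part (y + 1/2))) M).
  - rewrite !sum_lt_indicator_lt, <- minus_IZR. unfold floorR. f_equal. lia.
  - clear HM. induction M as [| M IH]; simpl; [ring |].
    rewrite <- IH, crossing_half_integer. ring.
Qed.

Lemma is_RInt_sum_lt (F : nat -> R -> R) (v : nat -> R) a b n :
  (forall k, (k < n)%nat -> is_RInt (F k) a b (v k)) ->
  is_RInt (fun t => sum_lt (fun k => F k t) n) a b (sum_lt v n).
Proof.
  induction n as [| n IH]; intros HF; simpl.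
  - assert (H0 := is_RInt_const a b (0 : R)).
    change (scal (b - a) (0 : R)) with ((b - a) * 0) in H0. rewrite Rmult_0_r in H0.
    exact H0.
  - exact (is_RInt_plus _ _ _ _ _ _ (IH (fun k Hk => HF k ltac:(lia))) (HF n ltac:(lia))).
Qed.

Lemma is_RInt_step_cos (h : R -> R) (s a b : R) :
  a <= b -> (forall t, a < t < b -> h t = s) ->
  is_RInt (fun t => h t * cos t) a b (s * (sin b - sin a)).
Proof.
  intros Hab Hh.
  apply (is_RInt_ext (fun t => s * cos t)).
  { rewrite Rmin_left, Rmax_right by lra. intros t Ht. rewrite Hh; auto. }
  replace (s * (sin b - sin a)) with (minus (s * sin b) (s * sin a))
    by (unfold minus, plus, opp; simpl; ring).
  apply (is_RInt_derive (fun t => s * sin t)).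
  - intros t _. auto_derive; [exact I | ring].
  - intros t _. apply (ex_derive_continuous (fun t => s * cos t)). auto_derive. exact I.
Qed.

Lemma is_RInt_cos_sq : is_RInt (fun t => cos t * cos t) (- PI) PI PI.
Proof.
  set (F := fun t => (t + sin t * cos t) / 2).
  replace PI with (minus (F PI) (F (- PI))) at 3
    by (unfold F, minus, plus, opp; simpl; rewrite sin_neg, sin_PI; field).
  apply (is_RInt_derive F).
  - intros t _. unfold F. auto_derive; [exact I |].
    assert (H := sin2_cos2 t). unfold Rsqr in H. nra.
  - intros t _. apply (ex_derive_continuous (fun t => cos t * cos t)). auto_derive. exact I.
Qed.

Lemma cos_Rabs t : cos (Rabs t) = cos t.
Proof. unfold Rabs. destruct (Rcase_abs t); [apply cos_neg | reflexivity]. Qed.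

Lemma acos_le_PI2 c : 0 <= c <= 1 -> acos c <= PI / 2.
Proof.
  intros Hc. rewrite acos_asin by lra.
  enough (0 <= asin c) by lra.
  destruct (asin_bound c). apply sin_incr_0; try lra.
  rewrite sin_0, sin_asin; lra.
Qed.

Section CrossingIntegral.

Variable c : R.
Hypothesis c_range : 0 < c <= 1.

Let alpha := acos c.

Let cos_alpha : cos alpha = c.
Proof. apply cos_acos. lra. Qed.

Let alpha_range : 0 <= alpha <= PI / 2.
Proof. split; [apply acos_bound | apply acos_le_PI2; lra]. Qed.

Lemma crossing_cos_inner t : Rabs t < alpha -> crossing c (cos t) = 1.
Proof.
  intros Ht. assert (Habs := Rabs_pos t). pose proof PI_RGT_0.
  assert (Hcos : c < cos t).
  { rewrite <- cos_Rabs, <- cos_alpha. apply cos_decreasing_1; lra. }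
  unfold crossing. destruct (Rle_dec c (cos t)), (Rlt_dec (cos t) (- c)); lra.
Qed.

Lemma crossing_cos_middle t : alpha < Rabs t < PI - alpha -> crossing c (cos t) = 0.
Proof.
  intros Ht. pose proof PI_RGT_0.
  assert (Hcos : - c < cos t < c).
  { rewrite <- cos_Rabs, <- cos_alpha, <- Rtrigo_facts.cos_pi_minus.
    split; apply cos_decreasing_1; lra. }
  unfold crossing. destruct (Rle_dec c (cos t)), (Rlt_dec (cos t) (- c)); lra.
Qed.

Lemma crossing_cos_outer t : PI - alpha < Rabs t <= PI -> crossing c (cos t) = -1.
Proof.
  intros Ht. pose proof PI_RGT_0.
  assert (Hcos : cos t < - c).
  { rewrite <- cos_Rabs, <- cos_alpha, <- Rtrigo_facts.cos_pi_minus.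
    apply cos_decreasing_1; lra. }
  unfold crossing. destruct (Rle_dec c (cos t)), (Rlt_dec (cos t) (- c)); lra.
Qed.

Lemma is_RInt_crossing_cos :
  is_RInt (fun t => crossing c (cos t) * cos t) (- PI) PI (4 * sin alpha).
Proof.
  pose proof PI_RGT_0.
  assert (P1 := is_RInt_step_cos (fun t => crossing c (cos t)) (-1) (- PI) (- PI + alpha)
                  ltac:(lra) (fun t Ht => crossing_cos_outer t ltac:(rewrite Rabs_left; lra))).
  assert (P2 := is_RInt_step_cos (fun t => crossing c (cos t)) 0 (- PI + alpha) (- alpha)
                  ltac:(lra) (fun t Ht => crossing_cos_middle t ltac:(rewrite Rabs_left; lra))).
  assert (P3 := is_RInt_step_cos (fun t => crossing c (cos t)) 1 (- alpha) alpha
                  ltac:(lra) (fun t Ht => crossing_cos_inner t ltac:(apply Rabs_def1; lra))).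
  assert (P4 := is_RInt_step_cos (fun t => crossing c (cos t)) 0 alpha (PI - alpha)
                  ltac:(lra) (fun t Ht => crossing_cos_middle t ltac:(rewrite Rabs_right; lra))).
  assert (P5 := is_RInt_step_cos (fun t => crossing c (cos t)) (-1) (PI - alpha) PI
                  ltac:(lra) (fun t Ht => crossing_cos_outer t ltac:(rewrite Rabs_right; lra))).
  refine (eq_ind _ (fun v => is_RInt _ (- PI) PI v)
            (is_RInt_Chasles _ _ _ _ _ _ (is_RInt_Chasles _ _ _ _ _ _ P1 P2)
               (is_RInt_Chasles _ _ _ _ _ _ (is_RInt_Chasles _ _ _ _ _ _ P3 P4) P5)) _ _).
  unfold plus; simpl.
  replace (- PI + alpha) with (- (PI - alpha)) by ring.
  rewrite !sin_neg, sin_PI_x, sin_PI. ring.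
Qed.

End CrossingIntegral.

Lemma INR_Z_to_nat_Int_part x : 0 <= x -> INR (Z.to_nat (Int_part x)) = floorR x.
Proof.
  intros Hx. unfold floorR. rewrite INR_IZR_INZ, Z2Nat.id; [reflexivity |].
  apply Z_le_Int_part. exact Hx.
Qed.

Lemma is_RInt_integrand r delta : 0 < r -> 0 < delta ->
  let Rr := r / delta in
  let N := Z.to_nat (Int_part (Rr + 1/2)) in
  is_RInt (integrand r delta) (- PI) PI
    (4 * delta / Rr * (PI * Rr * Rr / 4 - sum_lt (fun k => semicircle Rr (INR k + 1/2)) N)).
Proof.
  intros Hr Hdelta Rr N.
  assert (HR : 0 < Rr) by (apply Rdiv_lt_0_compat; auto).
  assert (HN : Z.of_nat N = Int_part (Rr + 1/2))
    by (apply Z2Nat.id, Z_le_Int_part; simpl; lra).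
  assert (HNR : INR N <= Rr + 1/2)
    by (unfold N; rewrite INR_Z_to_nat_Int_part by lra; apply base_Int_part).
  assert (Hlevel : forall k, (k < N)%nat -> 0 < (INR k + 1/2) / Rr <= 1).
  { intros k Hk.
    assert (Hk1 : INR k + 1 <= INR N) by (rewrite <- S_INR; apply le_INR; lia).
    assert (Hk0 := pos_INR k).
    split; [apply Rdiv_lt_0_compat; lra |].
    apply Rmult_le_reg_r with Rr; [lra |].
    replace ((INR k + 1/2) / Rr * Rr) with (INR k + 1/2) by (field; lra). lra. }
  set (step_form := fun t => r * (cos t * cos t)
         + - delta * sum_lt (fun k => crossing ((INR k + 1/2) / Rr) (cos t) * cos t) N).
  assert (Hstep : forall t, step_form t = integrand r delta t).
  { intros t. unfold step_form, integrand, Dd, Qd.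
    replace (r * cos t / delta) with (Rr * cos t) by (unfold Rr; field; lra).
    assert (Hy : - Rr <= Rr * cos t <= Rr) by (destruct (COS_bound t); split; nra).
    destruct (base_Int_part (Rr + 1/2)). destruct (base_Int_part (Rr * cos t + 1/2)).
    rewrite (floorR_half_eq_sum_crossing (Rr * cos t) N).
    2: { rewrite HN. split; apply Z_le_Int_part; [rewrite opp_IZR |]; lra. }
    rewrite sum_lt_mult_r.
    rewrite (sum_lt_ext _ (fun k => crossing (INR k + 1/2) (Rr * cos t))).
    - ring.
    - intros k _. rewrite <- (crossing_scale Rr) by lra. f_equal. field. lra. }
  apply (is_RInt_ext step_form); [intros t _; apply Hstep |].
  refine (eq_ind _ (fun v => is_RInt _ (- PI) PI v)
    (is_RInt_plus _ _ _ _ _ _ (is_RInt_scal _ _ _ r _ is_RInt_cos_sq)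
       (is_RInt_scal _ _ _ (- delta) _
          (is_RInt_sum_lt _ (fun k => 4 * sin (acos ((INR k + 1/2) / Rr))) _ _ N
             (fun k Hk => is_RInt_crossing_cos _ (Hlevel k Hk))))) _ _).
  unfold plus, scal; simpl; unfold mult; simpl.
  rewrite (sum_lt_ext _ (fun k => 4 / Rr * semicircle Rr (INR k + 1/2))), sum_lt_scal_l.
  - unfold Rr. field. lra.
  - intros k Hk. specialize (Hlevel k Hk).
    rewrite sin_acos, <- (semicircle_eq_scaled Rr HR) by lra. field. lra.
Qed.

Lemma Rpower_three_halves x : 0 < x -> Rpower x (3/2) = x * sqrt x.
Proof.
  intros Hx. replace (3/2) with (1 + /2) by field.
  rewrite Rpower_plus, Rpower_1, Rpower_sqrt; auto.
Qed.

Lemma four_delta_div_mul_sqrt r delta : 0 < r -> 0 < delta ->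
  4 * delta / (r / delta) * (sqrt (r / delta) / 100) = 1/25 * Rpower delta (3/2) / sqrt r.
Proof.
  intros Hr Hdelta.
  assert (HR : 0 < r / delta) by (apply Rdiv_lt_0_compat; auto).
  assert (Hs : sqrt (r / delta) * sqrt (r / delta) = r / delta) by (apply sqrt_sqrt; lra).
  assert (Hs0 : 0 < sqrt (r / delta)) by (apply sqrt_lt_R0; lra).
  assert (Hd0 : 0 < sqrt delta) by (apply sqrt_lt_R0; lra).
  replace (sqrt r) with (sqrt (r / delta) * sqrt delta)
    by (rewrite <- sqrt_mult by lra; f_equal; field; lra).
  rewrite Rpower_three_halves by lra.
  set (s := sqrt (r / delta)) in *.
  replace (4 * delta / (r / delta)) with (4 * delta / (s * s)) by (rewrite Hs; reflexivity).
  field. lra.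
Qed.

Theorem lemma5p1 :
  exists eps0 C1 : R, 0 < eps0 /\ 0 < C1 /\
  exists R0 : R,
    forall r delta : R, 0 < r -> 0 < delta ->
      let Rr := r / delta in
      let eps := Rr + 1/2 - floorR (Rr + 1/2) in
      0 <= eps <= eps0 -> R0 <= Rr ->
      exists pr : Riemann_integrable (integrand r delta) (- PI) PI,
        RiemannInt pr >= C1 * Rpower delta (3/2) / sqrt r.
Proof.
  exists (1/1000), (1/25). split; [lra |]. split; [lra |]. exists 100.
  intros r delta Hr Hdelta Rr eps Heps HR.
  assert (HRpos : 0 < Rr) by (apply Rdiv_lt_0_compat; auto).
  assert (Hint := is_RInt_integrand r delta Hr Hdelta). cbv zeta in Hint. fold Rr in Hint.
  set (N := Z.to_nat (Int_part (Rr + 1/2))) in Hint.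
  exists (ex_RInt_Reals_0 _ _ _ (ex_intro _ _ Hint)).
  rewrite <- RInt_Reals, (is_RInt_unique _ _ _ _ Hint).
  assert (HN : INR N = floorR (Rr + 1/2)) by (apply INR_Z_to_nat_Int_part; lra).
  assert (Hgap : sqrt Rr / 100
                 <= PI * Rr * Rr / 4 - sum_lt (fun k => semicircle Rr (INR k + 1/2)) N).
  { apply quarter_disc_minus_midpoint_sum; [exact HRpos | exact HR | |];
      rewrite HN; [apply base_Int_part | unfold eps in Heps; lra]. }
  rewrite <- (four_delta_div_mul_sqrt r delta Hr Hdelta).
  apply Rle_ge, Rmult_le_compat_l; [apply Rdiv_le_0_compat; lra | exact Hgap].
Qed.
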